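(* Let $d\geq1$, $T\geq2$, and let $x^0,x^1\in(\mathbb{R}^d)^T$ satisfy $x^0_{t,j}\neq x^1_{t,j}$ for all $1\le t\le T$, $1\le j\le d$. Let $D:=\prod_{t=1}^T\prod_{j=1}^d\{x^0_{t,j},x^1_{t,j}\}\subseteq(\mathbb{R}^d)^T$. Let $V,V^{(n)}:D\to\mathbb{R}$, $n\in\mathbb{N}$, and real-valued functions $\hat h_{t,j},\hat g_j$ and $\hat h^{(n)}_{t,j},\hat g^{(n)}_j$ be such that for all $x=(x_{t,j})\in D$, $V(x)=\sum_{t=1}^{T-1}\sum_{j=1}^d\hat h_{t,j}(x_1,\dots,x_t)(x_{t+1,j}-x_{t,j})+\sum_{j=1}^d\hat g_j(x_{T,j})$, and similarly for $V^{(n)}$ with $\hat h^{(n)}_{t,j},\hat g^{(n)}_j$, and such that $\hat g_j(x^0_{T,j})=\hat g^{(n)}_j(x^0_{T,j})=0$ for $j=2,\dots,d$ and all $n$. Then the values $\hat h_{t,j}(x_1,\dots,x_t)$ and $\hat g_j(x_{T,j})$ for $x\in D$ are uniquely determined by $V$. Moreover, if $V^{(n)}\to V$ pointwise on $D$, then $\hat h^{(n)}_{t,j}(x_1,\dots,x_t)\to\hat h_{t,j}(x_1,\dots,x_t)$ and $\hat g^{(n)}_j(x_{T,j})\to\hat g_j(x_{T,j})$ for all $x\in D$ and all $t,j$.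
   Context: Here $x_t=(x_{t,1},\dots,x_{t,d})\in\mathbb{R}^d$ denotes the $t$-th block of $x\in(\mathbb{R}^d)^T$. *)

From HB Require Import structures.
From mathcomp Require Import all_boot all_order all_algebra.
From mathcomp Require Import all_classical all_reals topology normedtype sequences.
Set Implicit Arguments. Unset Strict Implicit. Unset Printing Implicit Defensive.
Import Order.TTheory GRing.Theory Num.Theory.
Local Open Scope ring_scope.

(* Time blocks are indexed by 'I_T.-1.+1 (= 'I_T when T >= 1); block t (0-based)
   is the paper's block t+1, so ord_max is the paper's block T. *)
Definition pt (R : Type) (d T : nat) := 'I_T.-1.+1 -> 'I_d -> R.

Definition inD (R : Type) (d T : nat) (x0 x1 x : pt R d T) : Prop :=
  forall t j, x t j = x0 t j \/ x t j = x1 t j.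

(* (x_1, ..., x_{t+1}) for 0-based t : 'I_T.-1 (paper's (x_1,...,x_t), t = 1..T-1) *)
Definition hist (R : Type) (d T : nat) (t : 'I_T.-1) (x : pt R d T)
  : 'I_t.+1 -> 'I_d -> R :=
  fun s j => x (widen_ord (leqW (ltn_ord t)) s) j.

Arguments hist {R d T} t x _ _.

Definition hfun (R : Type) (d T : nat) :=
  forall t : 'I_T.-1, 'I_d -> ('I_t.+1 -> 'I_d -> R) -> R.

Definition represents (R : pzRingType) (d T : nat) (x0 x1 : pt R d T)
  (V : pt R d T -> R) (h : hfun R d T) (g : 'I_d -> R -> R) : Prop :=
  forall x, inD x0 x1 x ->
    V x = \sum_(t < T.-1) \sum_(j < d)
            h t j (hist t x) * (x (lift ord0 t) j - x (widen_ord (leqnSn _) t) j)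
          + \sum_(j < d) g j (x ord_max j).

(* g_j(x0_{T,j}) = 0 for j = 2..d (0-based: j > 0) *)
Definition normalized (R : pzRingType) (d T : nat) (x0 : pt R d T)
  (g : 'I_d -> R -> R) : Prop :=
  forall j : 'I_d, (0 < (j : nat))%N -> g j (x0 ord_max j) = 0.

From HB Require Import structures.
From mathcomp Require Import all_boot all_order all_algebra.
From mathcomp Require Import all_classical all_reals topology normedtype sequences.
From mathcomp Require Import zify ring.
Import Order.TTheory GRing.Theory Num.Theory.
Import numFieldNormedType.Exports.
Local Open Scope classical_set_scope.
Local Open Scope ring_scope.
Set Implicit Arguments. Unset Strict Implicit. Unset Printing Implicit Defensive.

(* Since (h, g) |-> V is linear, it suffices to show that the values of h and g
   on D lie in every linear space Z of real families that contains the values of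
   V on D: Z = {0} gives uniqueness, Z = null sequences gives convergence.
   On the two points {x0_T, x1_T} each g_j is affine, with slope k_j and
   intercept a_j, and telescoping rewrites V(x) as
     sum_t sum_j (h_{t,j} + k_j) (x_{t+1,j} - x_{t,j}) + sum_j (a_j + k_j x_{1,j}).
   Flipping the single coordinate x_{s,j} between its two values changes V by
   (x1_{s,j} - x0_{s,j}) times the coefficient h_{s-1,j} + k_j of x_{s,j}
   (just k_j for s = 1), plus terms involving only the coefficients of later
   blocks. Backward induction on s puts every coefficient, hence every k_j and
   h_{t,j}, in Z. Finally the normalization gives a_j for j >= 2, and V(x0)
   gives a_1. *)

Record is_subspace (F : pzRingType) (I : Type) (Z : (I -> F) -> Prop) : Prop :=
  IsSubspace {
    subspace0 : Z (fun=> 0);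
    subspaceD : forall u v, Z u -> Z v -> Z (fun i => u i + v i);
    subspaceZ : forall c u, Z u -> Z (fun i => c * u i) }.

Section Subspace.
Variables (F : pzRingType) (I : Type) (Z : (I -> F) -> Prop).
Hypothesis subZ : is_subspace Z.

Lemma subspaceB u v : Z u -> Z v -> Z (fun i => u i - v i).
Proof.
move=> Zu Zv; have := subspaceD subZ Zu (subspaceZ subZ (-1) Zv).
by under eq_fun do rewrite mulN1r.
Qed.

Lemma subspace_sum (J : Type) (r : seq J) (P : pred J) (u : J -> I -> F) :
  (forall k, P k -> Z (u k)) -> Z (fun i => \sum_(k <- r | P k) u k i).
Proof.
move=> Zu; elim: r => [|k r IHr].
  by under eq_fun do rewrite big_nil; exact: subspace0.
under eq_fun do rewrite big_cons; case: (boolP (P k)) => // Pk.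
exact: subspaceD (Zu k Pk) IHr.
Qed.

End Subspace.

Lemma zero_subspace (F : pzRingType) (I : Type) :
  is_subspace (fun u : I -> F => forall i, u i = 0).
Proof. by split=> [i|u v Zu Zv i|c u Zu i]; rewrite ?Zu ?Zv ?addr0 ?mulr0. Qed.

Lemma cvg0_subspace (K : numFieldType) (I : Type) (E : set_system I) {FE : Filter E} :
  is_subspace (fun u : I -> K => u @ E --> 0).
Proof.
split=> [|u v Zu Zv|c u Zu]; first exact: cvg_cst.
- by rewrite -[0]addr0; apply: cvgD.
- by rewrite -(mulr0 c); apply: cvgMl_tmp.
Qed.

Lemma sumrB_if_eq (V : zmodType) (J : finType) (A : Type) (f : J -> A -> V)
    (y : J -> A) j a b :
  \sum_i f i (if i == j then a else y i) - \sum_i f i (if i == j then b else y i)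
  = f j a - f j b.
Proof.
by rewrite -sumrB (bigD1 j) //= !eqxx big1 ?addr0 // => i /negbTE ->; rewrite subrr.
Qed.

Lemma telescope_ord (V : zmodType) n (f : 'I_n.+1 -> V) :
  \sum_(t < n) (f (lift ord0 t) - f (widen_ord (leqnSn n) t)) = f ord_max - f ord0.
Proof.
rewrite sumrB; apply/eqP; rewrite subr_eq addrAC eq_sym subr_eq.
by rewrite addrC [X in _ == X]addrC -big_ord_recl big_ord_recr.
Qed.

Lemma ord_down_ind n (P : 'I_n -> Prop) :
  (forall s : 'I_n, (forall s' : 'I_n, (s < s')%N -> P s') -> P s) -> forall s, P s.
Proof.
move=> IH s; have [k] := ubnP (n - s); elim: k s => // k IHk s lt_nsk.
apply: IH => s' lt_ss'; apply: IHk.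
have := ltn_ord s'; lia.
Qed.

Section Update.
Variables (R : Type) (d T : nat).
Implicit Types (x : pt R d T) (s : 'I_T.-1.+1) (j : 'I_d).

Definition upd x s j (v : R) : pt R d T :=
  fun r i => if (r == s) && (i == j) then v else x r i.

Lemma upd_at x s j v i : upd x s j v s i = if i == j then v else x s i.
Proof. by rewrite /upd eqxx. Qed.

Lemma upd_other x s j v r i : r != s -> upd x s j v r i = x r i.
Proof. by rewrite /upd => /negbTE->. Qed.

Lemma inD_upd x0 x1 x s j (b : bool) :
  inD x0 x1 x -> inD x0 x1 (upd x s j (if b then x1 s j else x0 s j)).
Proof.
move=> xD r i; rewrite /upd; case: ifP => [/andP[/eqP-> /eqP->]|_]; last exact: xD.
by case: b; [right|left].
Qed.

Lemma hist_upd (t : 'I_T.-1) x s j v : (t < s)%N -> hist t (upd x s j v) = hist t x.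
Proof.
move=> lt_ts; apply/funext => r; apply/funext => i; apply: upd_other.
by apply: contraTneq lt_ts => <- /=; rewrite -leqNgt -ltnS.
Qed.

End Update.

Section Representation.
Variables (F : fieldType) (d T : nat) (x0 x1 : pt F d T).
Hypothesis x01 : forall t j, x0 t j != x1 t j.
Implicit Types (x : pt F d T) (s : 'I_T.-1.+1) (t : 'I_T.-1) (j : 'I_d).

Definition incr x t j := x (lift ord0 t) j - x (widen_ord (leqnSn _) t) j.

Section Coefficients.
Variables (h : hfun F d T) (g : 'I_d -> F -> F).
(* Otherwise [Set Implicit Arguments] makes the time index of [h] implicit. *)
Arguments h : clear implicits.

Definition slope j :=
  (g j (x1 ord_max j) - g j (x0 ord_max j)) / (x1 ord_max j - x0 ord_max j).

Definition intercept j := g j (x0 ord_max j) - slope j * x0 ord_max j.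

(* After telescoping, the coefficient of [x s j] in [V x]: [h_{s-1,j} + slope j],
   or [slope j] alone for the first block. *)
Definition coef s j x := slope j + oapp (fun t => h t j (hist t x)) 0 (unlift ord0 s).

Definition tail s x :=
  \sum_(t < T.-1 | (s <= t)%N) \sum_(i < d) coef (lift ord0 t) i x * incr x t i.

Lemma coef_ord0 j x : coef ord0 j x = slope j.
Proof. by rewrite /coef unlift_none addr0. Qed.

Lemma coef_lift t j x : coef (lift ord0 t) j x = slope j + h t j (hist t x).
Proof. by rewrite /coef liftK. Qed.

Lemma coef_upd s' x s j v i : (s' <= s)%N -> coef s' i (upd x s j v) = coef s' i x.
Proof.
case: (unliftP ord0 s') => [t ->|->] le_s's; last by rewrite !coef_ord0.
by rewrite !coef_lift hist_upd.
Qed.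

Lemma g_affine j x : inD x0 x1 x -> g j (x ord_max j) = intercept j + slope j * x ord_max j.
Proof.
have nz : x1 ord_max j - x0 ord_max j != 0 by rewrite subr_eq0 eq_sym.
by move/(_ ord_max j) => [] ->; rewrite /intercept /slope; field.
Qed.

Variable V : pt F d T -> F.
Hypothesis repV : represents x0 x1 V h g.

Lemma represents_coef x : inD x0 x1 x ->
  V x = \sum_(t < T.-1) \sum_(i < d) coef (lift ord0 t) i x * incr x t i
        + \sum_(i < d) (intercept i + slope i * x ord0 i).
Proof.
move=> xD; have slope_part : \sum_(t < T.-1) \sum_(i < d) slope i * incr x t i
    = \sum_(i < d) slope i * (x ord_max i - x ord0 i).
  by rewrite exchange_big; apply: eq_bigr => i _; rewrite -mulr_sumr (telescope_ord (x^~ i)).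
rewrite repV // (eq_bigr _ (fun i _ => g_affine i xD)).
under [in RHS]eq_bigr do under eq_bigr do rewrite coef_lift mulrDl.
under [in RHS]eq_bigr do rewrite big_split.
rewrite [in RHS]big_split /= slope_part (addrC (\sum_(i < d) slope i * _)) -addrA -big_split /=.
by congr (_ + _); apply: eq_bigr => i _; rewrite mulrBr [RHS]addrCA subrK.
Qed.

Definition head s x :=
  \sum_(t < T.-1 | (t < s)%N) \sum_(i < d) coef (lift ord0 t) i x * incr x t i
  + \sum_(i < d) (intercept i + slope i * x ord0 i).

Lemma represents_head_tail s x : inD x0 x1 x -> V x = head s x + tail s x.
Proof.
move=> xD; rewrite represents_coef // (bigID (fun t : 'I_T.-1 => (s <= t)%N)) /=.
rewrite [X in X + _]addrC addrAC /head; congr (_ + _ + _).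
by apply: eq_bigl => t; rewrite ltnNge.
Qed.

Lemma head_ord0 x : head ord0 x = \sum_(i < d) (intercept i + slope i * x ord0 i).
Proof. by rewrite /head big_pred0 ?add0r. Qed.

Lemma head_upd_diff s x j v v' :
  head s (upd x s j v) - head s (upd x s j v') = (v - v') * coef s j x.
Proof.
case: (unliftP ord0 s) => [t0 {s}->|{s}->]; last first.
  rewrite !head_ord0 coef_ord0.
  under eq_bigr do rewrite upd_at; under [X in _ - X]eq_bigr do rewrite upd_at.
  by rewrite (sumrB_if_eq (fun i a => intercept i + slope i * a)); ring.
set s := lift ord0 t0.
have lt_t0s : (t0 < s)%N by rewrite lift0.
have before_s t : (t < s)%N -> widen_ord (leqnSn _) t != s.
  by move=> lt_ts; apply: contraTneq lt_ts => <-; rewrite ltnn.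
pose rest y := \sum_(t < T.-1 | (t < s)%N && (t != t0))
                 \sum_(i < d) coef (lift ord0 t) i y * incr y t i
               + \sum_(i < d) (intercept i + slope i * y ord0 i).
have rest_upd v0 : rest (upd x s j v0) = rest x.
  (* the initial-block sums agree by computation, as [ord0 == s] reduces to [false] *)
  congr (_ + _).
  apply: eq_bigr => t /andP[lt_ts ne_tt0]; apply: eq_bigr => i _.
  by rewrite coef_upd // /incr !upd_other ?before_s // (inj_eq lift_inj).
have headE v0 : head s (upd x s j v0) = \sum_(i < d) coef s i x *
    ((if i == j then v0 else x s i) - x (widen_ord (leqnSn _) t0) i) + rest x.
  rewrite -(rest_upd v0) /head (bigD1 t0) //= -addrA; congr (_ + _).
  apply: eq_bigr => i _; rewrite coef_upd // /incr upd_at upd_other ?before_s //.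
rewrite !headE [X in _ - X]addrC addrKA.
by rewrite (sumrB_if_eq (fun i a => coef s i x * (a - x (widen_ord (leqnSn _) t0) i))); ring.
Qed.

Lemma represents_upd_diff x s j v v' :
  inD x0 x1 (upd x s j v) -> inD x0 x1 (upd x s j v') ->
  V (upd x s j v) - V (upd x s j v')
  = (v - v') * coef s j x + (tail s (upd x s j v) - tail s (upd x s j v')).
Proof.
by move=> yD y'D; rewrite !(represents_head_tail s) // opprD addrACA head_upd_diff.
Qed.

End Coefficients.

Lemma inD_x0 : inD x0 x1 x0.
Proof. by move=> t j; left. Qed.

Section Families.
Variables (I : Type) (Z : (I -> F) -> Prop).
Hypothesis subZ : is_subspace Z.
Variables (W : I -> pt F d T -> F) (H : I -> hfun F d T) (G : I -> 'I_d -> F -> F).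
Arguments H : clear implicits.
Hypothesis repW : forall n, represents x0 x1 (W n) (H n) (G n).
Hypothesis ZW : forall x, inD x0 x1 x -> Z (fun n => W n x).

Lemma tail_in_subspace s x :
  (forall s' j, (s < s')%N -> Z (fun n => coef (H n) (G n) s' j x)) ->
  Z (fun n => tail (H n) (G n) s x).
Proof.
move=> Zcoef; apply: subspace_sum => // t le_st; apply: subspace_sum => // j _.
under eq_fun do rewrite mulrC; apply: subspaceZ => //.
by apply: Zcoef; rewrite lift0 ltnS.
Qed.

Lemma coef_in_subspace s j x : inD x0 x1 x -> Z (fun n => coef (H n) (G n) s j x).
Proof.
elim/ord_down_ind: s j x => s IHs j x xD.
have nz : x1 s j - x0 s j != 0 by rewrite subr_eq0 eq_sym.
pose v (b : bool) := if b then x1 s j else x0 s j.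
have yD b : inD x0 x1 (upd x s j (v b)) by apply: inD_upd.
have Ztail b : Z (fun n => tail (H n) (G n) s (upd x s j (v b))).
  by apply: tail_in_subspace => s' j' lt_ss'; apply: IHs.
have := subspaceB subZ (subspaceB subZ (ZW (yD true)) (ZW (yD false)))
                       (subspaceB subZ (Ztail true) (Ztail false)).
under eq_fun => n do rewrite (represents_upd_diff (repW n) (yD true) (yD false)) addrK.
by move/(subspaceZ subZ (x1 s j - x0 s j)^-1); under eq_fun do rewrite mulKf //.
Qed.

Lemma slope_in_subspace j : Z (fun n => slope (G n) j).
Proof. by have := coef_in_subspace ord0 j inD_x0; under eq_fun do rewrite coef_ord0. Qed.

Lemma hfun_in_subspace t j x : inD x0 x1 x -> Z (fun n => H n t j (hist t x)).
Proof.
move=> xD; have := subspaceB subZ (coef_in_subspace (lift ord0 t) j xD) (slope_in_subspace j).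
by under eq_fun do rewrite coef_lift addrC addKr.
Qed.

Hypothesis nrmG : forall n, normalized x0 (G n).

Lemma intercept_in_subspace j : Z (fun n => intercept (G n) j).
Proof.
have Zpos (k : 'I_d) : (0 < k)%N -> Z (fun n => intercept (G n) k).
  move=> k_gt0; under eq_fun do rewrite /intercept nrmG // sub0r mulrC -mulNr.
  by apply: subspaceZ => //; exact: slope_in_subspace.
have [j0|] := posnP j; last exact: Zpos.
have Zsum : Z (fun n => \sum_(k < d) intercept (G n) k).
  have E n : \sum_(k < d) intercept (G n) k = W n x0 - tail (H n) (G n) ord0 x0
                                         - \sum_(k < d) x0 ord0 k * slope (G n) k.
    rewrite (represents_head_tail (repW n) ord0 inD_x0) head_ord0 [in RHS]big_split /=.
    by under [X in _ - X]eq_bigr do rewrite mulrC; ring.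
  under eq_fun do rewrite E.
  apply: subspaceB => //; first apply: subspaceB => //; first exact: ZW inD_x0.
    by apply: tail_in_subspace => s' k _; apply: coef_in_subspace inD_x0.
  by apply: subspace_sum => // k _; apply: subspaceZ => //; apply: slope_in_subspace.
have E n : intercept (G n) j = \sum_(k < d) intercept (G n) k
                               - \sum_(k < d | k != j) intercept (G n) k.
  by rewrite [in RHS](bigD1 j) //= addrK.
under eq_fun do rewrite E; apply: subspaceB => //.
by apply: subspace_sum => // k ne_kj; apply: Zpos; rewrite lt0n -j0.
Qed.

Lemma g_in_subspace j x : inD x0 x1 x -> Z (fun n => G n j (x ord_max j)).
Proof.
move=> xD; under eq_fun => n do rewrite (g_affine (G n) j xD) mulrC.
apply: subspaceD => //; first exact: intercept_in_subspace.
apply: subspaceZ => //; exact: slope_in_subspace.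
Qed.

End Families.

End Representation.

Lemma represents_sub (R : pzRingType) d T (x0 x1 : pt R d T) V h g V' h' g' :
  represents x0 x1 V h g -> represents x0 x1 V' h' g' ->
  represents x0 x1 (fun x => V x - V' x) (fun t j p => h t j p - h' t j p)
    (fun j v => g j v - g' j v).
Proof.
move=> rep rep' x xD; rewrite rep // rep' // opprD addrACA -!sumrB.
congr (_ + _); apply: eq_bigr => t _; rewrite -sumrB.
by apply: eq_bigr => j _; rewrite mulrBl.
Qed.

Lemma normalized_sub (R : pzRingType) d T (x0 : pt R d T) g g' :
  normalized x0 g -> normalized x0 g' -> normalized x0 (fun j v => g j v - g' j v).
Proof. by move=> nrm nrm' j j_gt0; rewrite nrm // nrm' // subrr. Qed.

Theorem proposition3p2 (R : realType) (d T : nat) (hd : (1 <= d)%N) (hT : (2 <= T)%N)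
  (x0 x1 : pt R d T) (hx : forall t j, x0 t j != x1 t j) :
  (forall (V : pt R d T -> R) (h h' : hfun R d T) (g g' : 'I_d -> R -> R),
     represents x0 x1 V h g -> normalized x0 g ->
     represents x0 x1 V h' g' -> normalized x0 g' ->
     forall x, inD x0 x1 x ->
       (forall t j, h t j (hist t x) = h' t j (hist t x)) /\
       (forall j, g j (x ord_max j) = g' j (x ord_max j)))
  /\
  (forall (V : pt R d T -> R) (h : hfun R d T) (g : 'I_d -> R -> R)
          (Vn : nat -> pt R d T -> R) (hn : nat -> hfun R d T)
          (gn : nat -> 'I_d -> R -> R),
     represents x0 x1 V h g -> normalized x0 g ->
     (forall n, represents x0 x1 (Vn n) (hn n) (gn n)) ->
     (forall n, normalized x0 (gn n)) ->
     (forall x, inD x0 x1 x -> (fun n => Vn n x) @ \oo --> V x) ->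
     forall x, inD x0 x1 x ->
       (forall t j, (fun n => hn n t j (hist t x)) @ \oo --> h t j (hist t x)) /\
       (forall j, (fun n => gn n j (x ord_max j)) @ \oo --> g j (x ord_max j))).
Proof.
split=> [V h h' g g' rep nrm rep' nrm' x xD | V h g Vn hn gn rep nrm repn nrmn cvgV x xD].
  have subZ := zero_subspace R unit.
  have repW (_ : unit) := represents_sub rep rep'.
  have nrmW (_ : unit) := normalized_sub nrm nrm'.
  have ZW y (_ : inD x0 x1 y) (_ : unit) : V y - V y = 0 := subrr _.
  split=> [t j|j]; apply: subr0_eq.
    exact: (hfun_in_subspace hx subZ repW ZW t j xD).
  exact: (g_in_subspace hx subZ repW ZW nrmW j xD).
have subZ : is_subspace (fun u : nat -> R => u @ \oo --> 0) by exact: cvg0_subspace.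
have repW n := represents_sub (repn n) rep.
have nrmW n := normalized_sub (nrmn n) nrm.
have ZW y (yD : inD x0 x1 y) : (fun n => Vn n y - V y) @ \oo --> 0.
  by apply/subr_cvg0; exact: cvgV.
split=> [t j|j]; apply/subr_cvg0.
  exact: (hfun_in_subspace hx subZ repW ZW t j xD).
exact: (g_in_subspace hx subZ repW ZW nrmW j xD).
Qed.
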